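(* Fix $L>0$ and $0\le\bar h<h$ (and lane length $d>0$). Then for every $\bar\alpha\in[0,1]$ and every $n\ge1$, $$\frac{n\,c^{UB}(\bar\alpha)}{n\,c(\bar\alpha)}\;\le\;2\,\frac{L+h-\sqrt{(L+h)(L+\bar h)}}{h-\bar h}\;\le\;2,$$ and $$\frac{n\,c^{UB}(\bar\alpha)}{C^*_n(\bar\alpha)}\;\le\;\frac{2n(L+h)}{(2n-1)(L+h)+\sqrt{(L+h)(L+\bar h)}}\;\le\;\frac{2n}{2n-1},$$ where $C^*_n(\bar\alpha)=\max\{C(\boldsymbol{\alpha}):\boldsymbol{\alpha}\in[0,1]^n,\ G(\boldsymbol{\alpha})=0\}$. (Here $n\,c^{UB}(\bar\alpha)$ is the common total upper-bound capacity of every feasible $\boldsymbol\beta$, i.e. $C^{UB}(\boldsymbol\beta^* )$, and $n\,c(\bar\alpha)$ is the worst-case total capacity $C(\boldsymbol\alpha_* )$; thus the first inequality bounds the price of negligence $\Lambda$ and the second bounds the price of no control $\Gamma$.)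
   Context: Model of a road with $n\ge1$ parallel lanes of common length $d>0$. Vehicles have length $L>0$. A vehicle keeps a headway (space gap) $\bar h$ to the vehicle in front of it if both it and the vehicle in front are autonomous, and headway $h$ otherwise, where $0\le \bar h<h$. Set $k_1=(L+h)/d$ and $k_2=(h-\bar h)/d$. The capacity of a lane with autonomy level $\alpha\in[0,1]$ (vehicle types i.i.d. Bernoulli with probability $\alpha$ of being autonomous) is $c(\alpha)=\frac{1}{k_1-k_2\alpha^2}$, and the upper-bound capacity (all autonomous vehicles in the lane platooned together) is $c^{UB}(\beta)=\frac{1}{k_1-k_2\beta}$. Let $\bar\alpha\in[0,1]$ be the overall fraction of autonomous vehicles on the road. For $\boldsymbol{\alpha}\in[0,1]^n$ let $C(\boldsymbol{\alpha})=\sum_{i=1}^n c(\alpha_i)$ and $G(\boldsymbol{\alpha})=\sum_{i=1}^n(\alpha_i-\bar\alpha)c(\alpha_i)$. The price of negligence $\Lambda$ is the supremum over $\bar\alpha,n$ of the ratio of the optimal upper-bound total capacity $C^{UB}(\boldsymbol\beta^* )$ to the minimum of $C$ under $G=0$; the price of no control $\Gamma$ is the supremum over $\bar\alpha,n$ of the ratio of $C^{UB}(\boldsymbol\beta^* )$ to the maximum of $C$ under $G=0$. *)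

From Stdlib Require Import Reals.
Open Scope R_scope.

Fixpoint rsum (n : nat) (f : nat -> R) : R :=
  match n with
  | O => 0
  | S m => rsum m f + f m
  end.

(* Model parameters: vehicle length L, headways h (mixed) and hbar
   (autonomous-autonomous), lane length d. *)
Definition k1 (L h d : R) : R := (L + h) / d.
Definition k2 (h hbar d : R) : R := (h - hbar) / d.

(* Lane capacity with autonomy level a (i.i.d. Bernoulli vehicle types). *)
Definition cap (L h hbar d a : R) : R := 1 / (k1 L h d - k2 h hbar d * a ^ 2).

(* Upper-bound lane capacity (autonomous vehicles platooned). *)
Definition capUB (L h hbar d b : R) : R := 1 / (k1 L h d - k2 h hbar d * b).

Definition Ctot (L h hbar d : R) (n : nat) (alpha : nat -> R) : R :=
  rsum n (fun i => cap L h hbar d (alpha i)).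

Definition Gcon (L h hbar d abar : R) (n : nat) (alpha : nat -> R) : R :=
  rsum n (fun i => (alpha i - abar) * cap L h hbar d (alpha i)).

Definition feasible (L h hbar d abar : R) (n : nat) (alpha : nat -> R) : Prop :=
  (forall i, (i < n)%nat -> 0 <= alpha i <= 1) /\ Gcon L h hbar d abar n alpha = 0.

Definition is_max_cap (L h hbar d abar : R) (n : nat) (M : R) : Prop :=
  (exists alpha, feasible L h hbar d abar n alpha /\ Ctot L h hbar d n alpha = M) /\
  (forall alpha, feasible L h hbar d abar n alpha -> Ctot L h hbar d n alpha <= M).

(* Write A = L + h, B = h - hbar and s = sqrt (A (L + hbar)), so that s^2 = A (A - B).
   Then capUB a / cap a = (A - B a^2) / (A - B a), and
     2 (A - s) (A - B a) - B (A - B a^2) = (A - B a - s)^2 >= 0,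
   which is the bound on the price of negligence, lane by lane.
   Under the constraint G = 0 one has
     C(alpha) = capUB(abar) * sum_i cap(alpha_i) / capUB(alpha_i),
   each summand being 1 when alpha_i is 0 or 1 and at least (A + s) / (2 A) in general.
   A feasible configuration with all lanes but one at level 0 or 1 exists (a discrete sign
   change followed by the intermediate value theorem), hence
   C^* >= capUB(abar) (n - 1 + (A + s) / (2 A)), which is the bound on the price of no control.
   The maximum C^* is attained because the feasible set is a compact subset of [0,1]^n. *)

From Stdlib Require Import Reals Ranalysis5 Lra Lia Psatz.
From mathcomp Require all_boot all_order all_algebra all_classical all_reals all_analysis.
From mathcomp Require Rstruct Rstruct_topology.

Definition unit_cube (n : nat) (a : nat -> R) : Prop :=
  forall i, (i < n)%nat -> 0 <= a i <= 1.

Module Compactness.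
Import all_boot all_order all_algebra all_classical all_reals all_analysis.
Import Rstruct Rstruct_topology.
Import Order.TTheory GRing.Theory Num.Theory Num.Def.
Import numFieldNormedType.Exports.
Local Open Scope classical_set_scope.
Local Open Scope ring_scope.

Definition clamp01 {K : realType} (x : K) : K := minr (maxr x 0) 1.

Lemma continuous_clamp01_comp (K : realType) (f : K -> K) :
  (forall x : K, 0 <= x <= 1 -> {for x, continuous f}) ->
  continuous (fun x : K => f (clamp01 x)).
Proof.
move=> cf x; apply: continuous_comp; last first.
  by apply: cf; rewrite le_min le_max lexx orbT ler01 ge_min lexx orbT.
apply: continuous_min; last exact: cvg_cst.
by apply: continuous_max; [exact: cvg_id | exact: cvg_cst].
Qed.

Lemma clamp01_id (K : realType) (x : K) : 0 <= x <= 1 -> clamp01 x = x.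
Proof. by case/andP=> x0 x1; rewrite /clamp01 max_l // min_l. Qed.

Lemma sum_coord_continuous (K : realType) n (f : K -> K) : continuous f ->
  continuous (fun v : 'rV[K]_n => \sum_(i < n) f (v ord0 i)).
Proof.
move=> cf; apply: (@continuous_big _ _ +%R 0 predT); first exact: add_continuous.
by move=> i _ v; apply: continuous_comp; [exact: coord_continuous | exact: cf].
Qed.

Lemma constrained_sum_max (K : realType) n (f g : K -> K) :
  continuous f -> continuous g ->
  (exists a : 'I_n -> K, (forall i, 0 <= a i <= 1) /\ \sum_i g (a i) = 0) ->
  exists a : 'I_n -> K, ((forall i, 0 <= a i <= 1) /\ \sum_i g (a i) = 0) /\
    forall b : 'I_n -> K, (forall i, 0 <= b i <= 1) -> \sum_i g (b i) = 0 ->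
      \sum_i f (b i) <= \sum_i f (a i).
Proof.
move=> cf cg [a0 [a0_cube a0_g]].
pose A := [set v : 'rV[K]_n | forall i, `[(0:K), 1]%classic (v ord0 i)] `&`
          ((fun v : 'rV[K]_n => \sum_(i < n) g (v ord0 i)) @^-1` [set 0]).
have A_compact : compact A.
  apply: compact_closedI.
    apply: (@rV_compact _ n (fun _ => `[(0:K), 1]%classic)) => _.
    exact: segment_compact.
  apply: preimage_closed; last exact: closed_eq.
  by move=> v _; exact: sum_coord_continuous.
have A_row (b : 'I_n -> K) :
    (forall i, 0 <= b i <= 1) -> \sum_i g (b i) = 0 -> A (\row_i b i).
  move=> b_cube b_g; split; first by move=> i; rewrite mxE /= in_itv /=.
  by rewrite /=; under eq_bigr do rewrite mxE.
have sum_f_cont :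
    {within A, continuous (fun v : 'rV[K]_n => \sum_(i < n) f (v ord0 i))}.
  by apply: continuous_subspaceT; exact: sum_coord_continuous.
have [|c] := compact_EVT_max _ A_compact sum_f_cont.
  by exists (\row_i a0 i); exact: A_row.
rewrite inE => -[c_cube c_g] c_max.
exists (fun i => c ord0 i); split=> [|b b_cube b_g].
  by split=> // i; have := c_cube i; rewrite /= in_itv.
have := c_max (\row_i b i); under eq_bigr do rewrite mxE.
by apply; rewrite inE; exact: A_row.
Qed.

Lemma rsum_big (m : nat) (F : nat -> R) : rsum m F = \sum_(i < m) F i.
Proof. by elim: m => [|m IH]; rewrite ?big_ord0 // big_ord_recr /= IH. Qed.

Lemma rsum_insub n (F : R -> R) (a : 'I_n -> R) :
  rsum n (fun i => F (oapp a 0 (insub i))) = \sum_i F (a i).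
Proof. by rewrite rsum_big; apply: eq_bigr => i _; rewrite valK. Qed.

Local Close Scope ring_scope.

Lemma unit_cube_ord n (a : nat -> R) :
  unit_cube n a -> forall i : 'I_n, (0 <= a i <= 1)%R.
Proof.
by move=> a_cube i; have [/RleP -> /RleP ->] := a_cube i (ssrnat.ltP (ltn_ord i)).
Qed.

Lemma rsum_constrained_max (n : nat) (f g : R -> R) :
  (forall x, 0 <= x <= 1 -> continuity_pt f x) ->
  (forall x, 0 <= x <= 1 -> continuity_pt g x) ->
  (exists a, unit_cube n a /\ rsum n (fun i => g (a i)) = 0) ->
  exists a, (unit_cube n a /\ rsum n (fun i => g (a i)) = 0) /\
    forall b, unit_cube n b -> rsum n (fun i => g (b i)) = 0 ->
      rsum n (fun i => f (b i)) <= rsum n (fun i => f (a i)).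
Proof.
have clamp_cont F : (forall x, 0 <= x <= 1 -> continuity_pt F x) ->
    continuous (fun x => F (clamp01 x)).
  move=> F_cont; apply: continuous_clamp01_comp => x /andP[/RleP x0 /RleP x1].
  exact/continuity_pt_cvg/F_cont.
have sum_clamp F b : unit_cube n b ->
    (\sum_(i < n) F (clamp01 (b i)) = rsum n (fun i => F (b i)))%R.
  move=> b_cube; rewrite rsum_big; apply: eq_bigr => i _.
  by rewrite clamp01_id ?unit_cube_ord.
move=> /clamp_cont f_cont /clamp_cont g_cont [a0 [a0_cube a0_g]].
have [|a [[a_cube a_g] a_max]] := constrained_sum_max _ n _ _ f_cont g_cont.
  by exists (fun i => a0 i); split; [exact: unit_cube_ord | rewrite (sum_clamp g)].
have a_clamp i : clamp01 (a i) = a i by rewrite clamp01_id.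
have a'_cube : unit_cube n (fun i => oapp a 0 (insub i)).
  move=> i /ssrnat.ltP i_lt; rewrite insubT /=.
  by have /andP[/RleP ? /RleP ?] := a_cube (Ordinal i_lt).
exists (fun i => oapp a 0 (insub i)); split.
  by split=> //; rewrite rsum_insub -[RHS]a_g; apply: eq_bigr => i _; rewrite a_clamp.
move=> b b_cube b_g; apply/RleP; rewrite rsum_insub -(sum_clamp f b b_cube).
under [X in (_ <= X)%R]eq_bigr do rewrite -a_clamp.
apply: a_max; first exact: unit_cube_ord.
by rewrite (sum_clamp g).
Qed.

End Compactness.

Lemma rsum_ext n (f g : nat -> R) :
  (forall i, (i < n)%nat -> f i = g i) -> rsum n f = rsum n g.
Proof.
  induction n as [|n IH]; intros Hfg; simpl; [reflexivity|].
  rewrite IH by (intros; apply Hfg; lia); rewrite (Hfg n) by lia; reflexivity.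
Qed.

Lemma rsum_lin n (u v : R) (f g : nat -> R) :
  rsum n (fun i => u * f i + v * g i) = u * rsum n f + v * rsum n g.
Proof. induction n as [|n IH]; simpl; [ring|rewrite IH; ring]. Qed.

Lemma exists_sign_change (phi : nat -> R) m : (1 <= m)%nat ->
  phi 0%nat <= 0 -> 0 <= phi m -> exists k, (k < m)%nat /\ phi k <= 0 <= phi (S k).
Proof.
  induction m as [|m IH]; intros Hm H0 Hm'; [lia|].
  destruct (Rle_dec (phi m) 0) as [Hle|Hgt].
  - exists m; split; [lia|lra].
  - destruct m as [|m]; [lra|].
    destruct (IH ltac:(lia) H0 ltac:(lra)) as [k [Hk Hphi]].
    exists k; split; [lia|exact Hphi].
Qed.

Lemma IVT_le (f : R -> R) x y : x <= y ->
  (forall z, x <= z <= y -> continuity_pt f z) -> f x <= 0 -> 0 <= f y ->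
  exists z, x <= z <= y /\ f z = 0.
Proof.
  intros Hxy Hf Hfx Hfy.
  destruct (Req_dec (f x) 0) as [Hx|Hx]; [exists x; split; [lra|exact Hx]|].
  destruct (Req_dec (f y) 0) as [Hy|Hy]; [exists y; split; [lra|exact Hy]|].
  destruct (Req_dec x y) as [<-|Hne]; [lra|].
  destruct (IVT_interv f x y Hf ltac:(lra) ltac:(lra) ltac:(lra)) as [z Hz].
  exists z; exact Hz.
Qed.

Definition platoon (k : nat) (b : R) (i : nat) : R :=
  if (i <? k)%nat then 1 else if (i =? k)%nat then b else 0.

Lemma platoon_unit_cube n k b : 0 <= b <= 1 -> unit_cube n (platoon k b).
Proof.
  intros Hb i _; unfold platoon.
  destruct (i <? k)%nat; [lra|destruct (i =? k)%nat; lra].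
Qed.

Lemma platoon_succ k i : platoon k 1 i = platoon (S k) 0 i.
Proof.
  unfold platoon.
  destruct (Nat.ltb_spec i k), (Nat.eqb_spec i k), (Nat.ltb_spec i (S k)),
    (i =? S k)%nat; first [reflexivity | lia].
Qed.

Lemma rsum_platoon_prefix (F : R -> R) k b m : (m <= k)%nat ->
  rsum m (fun i => F (platoon k b i)) = INR m * F 1.
Proof.
  induction m as [|m IH]; intros Hm; simpl rsum; [simpl; ring|].
  rewrite IH by lia; unfold platoon.
  replace (m <? k)%nat with true by (symmetry; apply Nat.ltb_lt; lia).
  rewrite S_INR; ring.
Qed.

Lemma rsum_platoon (F : R -> R) k b n : (k < n)%nat ->
  rsum n (fun i => F (platoon k b i)) = INR k * F 1 + F b + INR (n - 1 - k) * F 0.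
Proof.
  induction n as [|n IH]; intros Hk; [lia|]; simpl rsum.
  destruct (Nat.eq_dec k n) as [->|Hne].
  - rewrite rsum_platoon_prefix by lia; unfold platoon.
    rewrite Nat.ltb_irrefl, Nat.eqb_refl.
    replace (S n - 1 - n)%nat with 0%nat by lia; simpl; ring.
  - rewrite IH by lia; unfold platoon.
    replace (n <? k)%nat with false by (symmetry; apply Nat.ltb_ge; lia).
    replace (n =? k)%nat with false by (symmetry; apply Nat.eqb_neq; lia).
    replace (S n - 1 - k)%nat with (S (n - 1 - k)) by lia.
    rewrite S_INR; ring.
Qed.

Lemma quadratic_gap_square (A B s x : R) : s * s = A * (A - B) ->
  2 * (A - s) * (A - B * x) - B * (A - B * x ^ 2) = (A - B * x - s) ^ 2.
Proof.
  intros Hs; transitivity ((A - B * x - s) ^ 2 + (A * (A - B) - s * s)); [ring|].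
  rewrite Hs; ring.
Qed.

Lemma mul_div_le_of_mul_le (N u q M : R) :
  0 <= N -> 0 < u -> 0 < q -> u * q <= M -> N * u / M <= N / q.
Proof.
  intros HN Hu Hq HM.
  replace (N * u / M) with (N / q * (u * q / M)) by (field; nra).
  rewrite <- (Rmult_1_r (N / q)) at 2.
  apply Rmult_le_compat_l; [apply Rle_mult_inv_pos; lra|].
  apply Rmult_le_reg_r with M; [nra|].
  replace (u * q / M * M) with (u * q) by (field; nra); lra.
Qed.

Section Capacity.

Variables (L h hbar d : R).
Hypotheses (HL : 0 < L) (Hhbar : 0 <= hbar) (Hh : hbar < h) (Hd : 0 < d).

Local Notation c := (cap L h hbar d).
Local Notation cUB := (capUB L h hbar d).
Local Notation A := (L + h).
Local Notation B := (h - hbar).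
Local Notation s := (sqrt ((L + h) * (L + hbar))).

Lemma denominators_pos a : 0 <= a <= 1 -> 0 < A - B * a ^ 2 /\ 0 < A - B * a.
Proof. intros Ha; assert (a ^ 2 <= a) by nra; split; nra. Qed.

Lemma cap_unit a : 0 <= a <= 1 -> c a = d / (A - B * a ^ 2).
Proof.
  intros Ha; destruct (denominators_pos a Ha).
  unfold cap, k1, k2; field; split; lra.
Qed.

Lemma capUB_unit a : 0 <= a <= 1 -> cUB a = d / (A - B * a).
Proof.
  intros Ha; destruct (denominators_pos a Ha).
  unfold capUB, k1, k2; field; split; lra.
Qed.

Lemma sqrt_gap : s * s = A * (A - B) /\ A - B <= s < A.
Proof.
  assert (Hs : s * s = A * (A - B)) by (rewrite sqrt_sqrt by nra; ring).
  pose proof (sqrt_pos ((L + h) * (L + hbar))); split; [exact Hs|split; nra].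
Qed.

Lemma capUB_div_cap_le a : 0 <= a <= 1 -> cUB a / c a <= 2 * (A - s) / B.
Proof.
  intros Ha; destruct (denominators_pos a Ha).
  destruct sqrt_gap as [Hs _].
  rewrite capUB_unit, cap_unit by exact Ha.
  assert (Hgap : 2 * (A - s) / B - d / (A - B * a) / (d / (A - B * a ^ 2))
                 = (A - B * a - s) ^ 2 / (B * (A - B * a))).
  { rewrite <- (quadratic_gap_square A B s a Hs); field; repeat split; lra. }
  assert (0 <= (A - B * a - s) ^ 2 / (B * (A - B * a))).
  { apply Rle_mult_inv_pos; [apply pow2_ge_0|nra]. }
  lra.
Qed.

Lemma cap_pos a : 0 <= a <= 1 -> 0 < c a.
Proof.
  intros Ha; destruct (denominators_pos a Ha); rewrite cap_unit by exact Ha.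
  apply Rdiv_lt_0_compat; lra.
Qed.

Lemma capUB_pos a : 0 <= a <= 1 -> 0 < cUB a.
Proof.
  intros Ha; destruct (denominators_pos a Ha); rewrite capUB_unit by exact Ha.
  apply Rdiv_lt_0_compat; lra.
Qed.

Lemma cap_continuity_pt a : 0 <= a <= 1 -> continuity_pt c a.
Proof.
  intros Ha; destruct (denominators_pos a Ha).
  unfold cap, k1, k2; apply continuity_pt_div.
  - apply continuity_pt_const; intros u v; reflexivity.
  - apply derivable_continuous_pt; reg.
  - replace ((L + h) / d - (h - hbar) / d * a ^ 2) with ((A - B * a ^ 2) / d)
      by (field; lra).
    assert (0 < (A - B * a ^ 2) / d) by (apply Rdiv_lt_0_compat; lra); lra.
Qed.

Lemma cap_div_capUB_ge a : 0 <= a <= 1 -> (A + s) / (2 * A) <= c a / cUB a.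
Proof.
  intros Ha; destruct sqrt_gap as [Hs Hsb].
  pose proof (cap_pos a Ha); pose proof (capUB_pos a Ha).
  replace (c a / cUB a) with (/ (cUB a / c a)) by (field; lra).
  replace ((A + s) / (2 * A)) with (/ (2 * (A - s) / B)).
  - apply Rinv_le_contravar; [apply Rdiv_lt_0_compat; lra|exact (capUB_div_cap_le a Ha)].
  - field_simplify_eq; [nra|lra].
Qed.

Lemma cap_div_capUB_01 : c 0 / cUB 0 = 1 /\ c 1 / cUB 1 = 1.
Proof.
  destruct (denominators_pos 1 ltac:(lra)).
  rewrite !cap_unit, !capUB_unit by lra; split; field; simpl; lra.
Qed.

(* Under the constraint G = 0 the weighted sum of the alpha_i c(alpha_i) equals
   abar C, which turns C (A - B abar) into sum_i c(alpha_i) (A - B alpha_i). *)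
Lemma Ctot_feasible abar n alpha : 0 <= abar <= 1 -> unit_cube n alpha ->
  Gcon L h hbar d abar n alpha = 0 ->
  Ctot L h hbar d n alpha = cUB abar * rsum n (fun i => c (alpha i) / cUB (alpha i)).
Proof.
  intros Habar Halpha HG; unfold Gcon, Ctot in *.
  rewrite (rsum_ext n (fun i => c (alpha i) / cUB (alpha i))
             (fun i => (A - B * abar) / d * c (alpha i)
                       + - B / d * ((alpha i - abar) * c (alpha i)))).
  - rewrite rsum_lin, HG, capUB_unit by exact Habar.
    destruct (denominators_pos abar Habar); field; lra.
  - intros i Hi; destruct (denominators_pos (alpha i) (Halpha i Hi)).
    rewrite capUB_unit by exact (Halpha i Hi); field; lra.
Qed.

Lemma Ctot_platoon abar n k b : 0 <= abar <= 1 -> (k < n)%nat -> 0 <= b <= 1 ->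
  Gcon L h hbar d abar n (platoon k b) = 0 ->
  Ctot L h hbar d n (platoon k b) = cUB abar * (INR n - 1 + c b / cUB b).
Proof.
  intros Habar Hk Hb HG.
  rewrite (Ctot_feasible abar) by
    (exact Habar || exact (platoon_unit_cube n k b Hb) || exact HG).
  rewrite (rsum_platoon (fun a => c a / cUB a)) by exact Hk.
  destruct cap_div_capUB_01 as [-> ->].
  rewrite !minus_INR by lia; simpl; ring.
Qed.

Lemma exists_feasible_platoon abar n : 0 <= abar <= 1 -> (1 <= n)%nat ->
  exists k b, (k < n)%nat /\ 0 <= b <= 1 /\ Gcon L h hbar d abar n (platoon k b) = 0.
Proof.
  intros Habar Hn.
  set (F := fun a => (a - abar) * c a).
  assert (HF0 : F 0 <= 0) by (pose proof (cap_pos 0 ltac:(lra)); unfold F; nra).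
  assert (HF1 : 0 <= F 1) by (pose proof (cap_pos 1 ltac:(lra)); unfold F; nra).
  assert (HG : forall k b, (k < n)%nat -> Gcon L h hbar d abar n (platoon k b)
                 = INR k * F 1 + F b + INR (n - 1 - k) * F 0)
    by (intros k b Hk; exact (rsum_platoon F k b n Hk)).
  (* Since platoon k 1 = platoon (S k) 0, the curves b |-> G (platoon k b) join up into a
     path from the all-human configuration (G <= 0) to the all-autonomous one (G >= 0). *)
  set (phi := fun j => Gcon L h hbar d abar n (platoon j 0)).
  assert (Hphi_succ : forall k, phi (S k) = Gcon L h hbar d abar n (platoon k 1)).
  { intros k; apply rsum_ext; intros i _; rewrite platoon_succ; reflexivity. }
  destruct (exists_sign_change phi n Hn) as [k [Hk [Hk0 Hk1]]].
  - unfold phi; rewrite HG by lia; simpl INR; pose proof (pos_INR (n - 1 - 0)); nra.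
  - replace (phi n) with (phi (S (n - 1))) by (f_equal; lia).
    rewrite Hphi_succ, HG by lia.
    rewrite Nat.sub_diag; simpl INR; pose proof (pos_INR (n - 1)); nra.
  - rewrite Hphi_succ in Hk1.
    destruct (IVT_le (fun b => Gcon L h hbar d abar n (platoon k b)) 0 1)
      as [b [Hb Hzero]]; [lra| |exact Hk0|exact Hk1|exists k, b; auto].
    intros z Hz.
    apply continuity_pt_locally_ext with
      (fun b => INR k * F 1 + F b + INR (n - 1 - k) * F 0) 1;
      [lra|intros y _; symmetry; apply HG, Hk|].
    apply continuity_pt_plus; [|apply continuity_pt_const; intros u v; reflexivity].
    apply continuity_pt_plus; [apply continuity_pt_const; intros u v; reflexivity|].
    apply continuity_pt_mult; [apply derivable_continuous_pt; reg|].
    exact (cap_continuity_pt z Hz).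
Qed.

Lemma exists_max_cap abar n : 0 <= abar <= 1 ->
  (exists alpha, feasible L h hbar d abar n alpha) ->
  exists M, is_max_cap L h hbar d abar n M.
Proof.
  intros Habar Hfeas.
  destruct (Compactness.rsum_constrained_max n c (fun a => (a - abar) * c a))
    as [a [Ha Hmax]].
  - exact cap_continuity_pt.
  - intros x Hx; apply continuity_pt_mult; [apply derivable_continuous_pt; reg|].
    exact (cap_continuity_pt x Hx).
  - exact Hfeas.
  - exists (Ctot L h hbar d n a); split; [exists a; split; [exact Ha|reflexivity]|].
    intros alpha [Halpha HG]; exact (Hmax alpha Halpha HG).
Qed.

Lemma negligence_bound_le_2 : 2 * (A - s) / B <= 2.
Proof.
  destruct sqrt_gap as [_ Hs].
  apply Rmult_le_reg_r with B; [lra|].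
  replace (2 * (A - s) / B * B) with (2 * (A - s)) by (field; lra); lra.
Qed.

Lemma no_control_ratio_le abar n k b M : 0 <= abar <= 1 ->
  (k < n)%nat -> 0 <= b <= 1 -> Gcon L h hbar d abar n (platoon k b) = 0 ->
  is_max_cap L h hbar d abar n M ->
  INR n * cUB abar / M <= 2 * INR n * A / ((2 * INR n - 1) * A + s).
Proof.
  intros Habar Hk Hb HG [_ Hmax].
  assert (HnR : 1 <= INR n) by (apply (le_INR 1); lia).
  destruct sqrt_gap as [_ Hs].
  pose proof (capUB_pos abar Habar) as HcUB.
  assert (HM : cUB abar * (INR n - 1 + (A + s) / (2 * A)) <= M).
  { apply Rle_trans with (Ctot L h hbar d n (platoon k b)).
    - rewrite (Ctot_platoon abar) by assumption.
      apply Rmult_le_compat_l; [lra|].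
      pose proof (cap_div_capUB_ge b Hb); lra.
    - apply Hmax; split; [exact (platoon_unit_cube n k b Hb)|exact HG]. }
  replace (2 * INR n * A / ((2 * INR n - 1) * A + s))
    with (INR n / (INR n - 1 + (A + s) / (2 * A))) by (field; split; nra).
  apply mul_div_le_of_mul_le; [lra|exact HcUB| |exact HM].
  apply Rplus_le_lt_0_compat; [lra|apply Rdiv_lt_0_compat; lra].
Qed.

End Capacity.

Lemma no_control_bound_le (A s N : R) : 0 < A -> 0 <= s -> 1 <= N ->
  2 * N * A / ((2 * N - 1) * A + s) <= 2 * N / (2 * N - 1).
Proof.
  intros HA Hs HN.
  replace (2 * N * A / ((2 * N - 1) * A + s))
    with (2 * N * (A / ((2 * N - 1) * A + s))) by (field; nra).
  replace (2 * N / (2 * N - 1)) with (2 * N * (A / ((2 * N - 1) * A))) by (field; lra).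
  apply Rmult_le_compat_l; [lra|].
  unfold Rdiv; apply Rmult_le_compat_l; [lra|].
  apply Rinv_le_contravar; nra.
Qed.

Theorem theorem3 (L h hbar d : R)
  (HL : 0 < L) (Hhbar : 0 <= hbar) (Hh : hbar < h) (Hd : 0 < d) :
  forall (abar : R) (n : nat), 0 <= abar <= 1 -> (1 <= n)%nat ->
    ( INR n * capUB L h hbar d abar / (INR n * cap L h hbar d abar)
        <= 2 * (L + h - sqrt ((L + h) * (L + hbar))) / (h - hbar)
      /\ 2 * (L + h - sqrt ((L + h) * (L + hbar))) / (h - hbar) <= 2 )
    /\
    (exists Cstar : R,
       is_max_cap L h hbar d abar n Cstar /\
       INR n * capUB L h hbar d abar / Cstar
         <= 2 * INR n * (L + h)
            / ((2 * INR n - 1) * (L + h) + sqrt ((L + h) * (L + hbar)))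
       /\ 2 * INR n * (L + h)
            / ((2 * INR n - 1) * (L + h) + sqrt ((L + h) * (L + hbar)))
          <= 2 * INR n / (2 * INR n - 1)).
Proof.
  intros abar n Habar Hn.
  split; [split|].
  - pose proof (cap_pos _ _ _ _ HL Hhbar Hh Hd abar Habar).
    replace (INR n * capUB L h hbar d abar / (INR n * cap L h hbar d abar))
      with (capUB L h hbar d abar / cap L h hbar d abar)
      by (field; split; [lra|apply not_0_INR; lia]).
    exact (capUB_div_cap_le _ _ _ _ HL Hhbar Hh Hd abar Habar).
  - exact (negligence_bound_le_2 _ _ _ HL Hhbar Hh).
  - destruct (exists_feasible_platoon _ _ _ _ HL Hhbar Hh Hd abar n Habar Hn)
      as [k [b [Hk [Hb HG]]]].
    destruct (exists_max_cap _ _ _ _ HL Hhbar Hh Hd abar n Habar) as [M HM].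
    { exists (platoon k b); split; [exact (platoon_unit_cube n k b Hb)|exact HG]. }
    exists M; split; [exact HM|split].
    + exact (no_control_ratio_le _ _ _ _ HL Hhbar Hh Hd abar n k b M Habar Hk Hb HG HM).
    + apply no_control_bound_le; [lra|apply sqrt_pos|apply (le_INR 1); exact Hn].
Qed.
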